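(* There exist an environment $E$ and a total preorder $\succeq$ on $\Pi^E$ such that $\succeq\in\mathrm{Ord}_{\mathrm{RM}}(E)$ but $\succeq\notin\mathrm{Ord}_{\mathrm{ONMR}}(E)$.
   Context: An environment is a tuple $E=(\mathcal S,\mathcal A,\mathcal T,\mathcal I)$ where $\mathcal S,\mathcal A$ are finite nonempty sets, $\mathcal T:\mathcal S\times\mathcal A\to\Delta(\mathcal S)$ and $\mathcal I\in\Delta(\mathcal S)$. A policy is a map $\pi:\mathcal S\to\Delta(\mathcal A)$ (stationary, possibly stochastic); $\Pi^E$ denotes the set of all policies. A trajectory $\xi=(s_0,a_0,s_1,a_1,\dots)$ is generated under $\pi$ by $s_0\sim\mathcal I$, $a_t\sim\pi(s_t)$, $s_{t+1}\sim\mathcal T(s_t,a_t)$; $\mathbb E^\pi_\xi$ denotes expectation under this distribution. An objective-specification formalism $X$ assigns to each environment $E$ a set of objective specifications, each inducing a total preorder $\succeq$ on $\Pi^E$; $\mathrm{Ord}_X(E)$ is the set of total preorders so induced. A specification defining a scalar $J:\Pi^E\to\mathbb R$ induces $\pi_1\succeq\pi_2\iff J(\pi_1)\ge J(\pi_2)$. RM (reward machines): specification $(U,u_0,\delta_U,\delta_{\mathcal R},\gamma)$ with $U$ a finite set, $u_0\in U$, $\delta_U:U\times\mathcal S\times\mathcal A\times\mathcal S\to U$, $\delta_{\mathcal R}:U\times U\to(\mathcal S\times\mathcal A\times\mathcal S\to\mathbb R)$, $\gamma\in[0,1)$; along a trajectory $u_{t+1}=\delta_U(u_t,s_t,a_t,s_{t+1})$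 and $J(\pi)=\mathbb E^\pi_\xi[\sum_{t=0}^\infty\gamma^t\,\delta_{\mathcal R}(u_t,u_{t+1})(s_t,a_t,s_{t+1})]$. ONMR: specification $(\mathcal R,f,\gamma)$ with $\mathcal R:\mathcal S\times\mathcal A\times\mathcal S\to\mathbb R$, $f:\mathbb R\to\mathbb R$, $\gamma\in[0,1)$; $J(\pi)=f\big(\mathbb E^\pi_\xi[\sum_{t=0}^\infty\gamma^t\mathcal R(s_t,a_t,s_{t+1})]\big)$. *)

From HB Require Import structures.
From mathcomp Require Import all_boot all_order all_algebra.
From mathcomp Require Import all_classical all_reals all_analysis.
From mathcomp Require Import Rstruct Rstruct_topology.

Set Implicit Arguments.
Unset Strict Implicit.
Unset Printing Implicit Defensive.
Import Order.TTheory GRing.Theory Num.Theory.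
Local Open Scope ring_scope.

Notation realR := Rdefinitions.R.

Definition is_dist (X : finType) (p : X -> realR) : Prop :=
  (forall x, 0 <= p x) /\ \sum_(x : X) p x = 1.

Record env := Env {
  St : finType;
  Act : finType;
  trans : St -> Act -> St -> realR;
  init : St -> realR;
  St_nonempty : (0 < #|St|)%N;
  Act_nonempty : (0 < #|Act|)%N;
  trans_dist : forall s a, is_dist (trans s a);
  init_dist : is_dist init }.

Definition policy (E : env) :=
  {pol : St E -> Act E -> realR | forall s, is_dist (pol s)}.

Definition pol_fun (E : env) (pol : policy E) : St E -> Act E -> realR :=
  proj1_sig pol.

Definition transition (E : env) : Type := (St E * Act E * St E)%type.

(* Sum over all continuations of n more transitions starting in state s,
   weighted by their probability under pol; h is the (reversed) history so far.
   f is applied to the full (chronological) list of transitions. *)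
Fixpoint pathsum (E : env) (pol : policy E) (n : nat) (s : St E)
    (h : seq (transition E)) (f : seq (transition E) -> realR) : realR :=
  match n with
  | 0 => f (rev h)
  | n'.+1 =>
      \sum_(a : Act E) \sum_(s' : St E)
        pol_fun pol s a * trans s a s' * pathsum pol n' s' ((s, a, s') :: h) f
  end.

Definition prefix_expect (E : env) (pol : policy E) (n : nat)
    (f : seq (transition E) -> realR) : realR :=
  \sum_(s0 : St E) init s0 * pathsum pol n s0 [::] f.

Definition series_sum (u : nat -> realR) : realR :=
  limn (fun n => \sum_(0 <= t < n) u t).

Record RMspec (E : env) := RMSpec {
  rmU : finType;
  rm_u0 : rmU;
  rm_dU : rmU -> St E -> Act E -> St E -> rmU;
  rm_dR : rmU -> rmU -> St E -> Act E -> St E -> realR;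
  rm_gamma : realR;
  rm_gamma_ge0 : 0 <= rm_gamma;
  rm_gamma_lt1 : rm_gamma < 1 }.
Arguments rm_u0 {E} r.
Arguments rm_dU {E} r _ _ _ _.
Arguments rm_dR {E} r _ _ _ _ _.
Arguments rm_gamma {E} r.

Definition rm_run (E : env) (M : RMspec E) (u : rmU M) (h : seq (transition E)) : rmU M :=
  foldl (fun u (x : transition E) => let: (s, a, s') := x in rm_dU M u s a s') u h.

(* reward of step t, given (at least) the first t+1 transitions *)
Definition rm_step_reward (E : env) (M : RMspec E) (t : nat)
    (h : seq (transition E)) : realR :=
  let ut := rm_run (rm_u0 M) (take t h) in
  match drop t h with
  | (s, a, s') :: _ => rm_dR M ut (rm_dU M ut s a s') s a s'
  | [::] => 0
  end.

(* J(pol) = E[ sum_t gamma^t dR(u_t,u_{t+1})(s_t,a_t,s_{t+1}) ], computed as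
   sum_t gamma^t E[ r_t ] (rewards are bounded, so the two agree). *)
Definition RM_J (E : env) (M : RMspec E) (pol : policy E) : realR :=
  series_sum (fun t => rm_gamma M ^+ t * prefix_expect pol t.+1 (rm_step_reward M t)).

Record ONMRspec (E : env) := ONMRSpec {
  on_R : St E -> Act E -> St E -> realR;
  on_f : realR -> realR;
  on_gamma : realR;
  on_gamma_ge0 : 0 <= on_gamma;
  on_gamma_lt1 : on_gamma < 1 }.
Arguments on_R {E} o _ _ _.
Arguments on_f {E} o _.
Arguments on_gamma {E} o.

Definition on_step_reward (E : env) (O : ONMRspec E) (t : nat)
    (h : seq (transition E)) : realR :=
  match drop t h with
  | (s, a, s') :: _ => on_R O s a s'
  | [::] => 0
  end.

Definition ONMR_J (E : env) (O : ONMRspec E) (pol : policy E) : realR :=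
  on_f O (series_sum (fun t =>
            on_gamma O ^+ t * prefix_expect pol t.+1 (on_step_reward O t))).

Definition induced_order (E : env) (J : policy E -> realR) : policy E -> policy E -> Prop :=
  fun p q => J q <= J p.

Definition same_rel (X : Type) (r1 r2 : X -> X -> Prop) : Prop :=
  forall p q, r1 p q <-> r2 p q.

Definition total_preorder (X : Type) (r : X -> X -> Prop) : Prop :=
  (forall x, r x x) /\ (forall x y z, r x y -> r y z -> r x z) /\
  (forall x y, r x y \/ r y x).

Definition Ord_RM (E : env) (r : policy E -> policy E -> Prop) : Prop :=
  exists M : RMspec E, same_rel r (induced_order (RM_J M)).

Definition Ord_ONMR (E : env) (r : policy E -> policy E -> Prop) : Prop :=
  exists O : ONMRspec E, same_rel r (induced_order (ONMR_J O)).

From mathcomp Require Import all_boot all_order all_algebra.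
From mathcomp Require Import all_classical all_reals all_analysis.
From mathcomp Require Import Rstruct Rstruct_topology.
From mathcomp Require Import ring lra.

Set Implicit Arguments.
Unset Strict Implicit.
Unset Printing Implicit Defensive.
Import Order.TTheory GRing.Theory Num.Theory.
Local Open Scope ring_scope.

(* The reward machine remembers whether the first action was a0 and pays 1 if the second action
   is a1, so on a one-state bandit with three actions its value is gamma p(a0) p(a1).  An ONMR
   objective on such a bandit only sees the policy through the mean reward sum_a p(a) R(a), so
   it must rank equally any two policies with the same mean.  But every level set of a mean on
   the 2-simplex contains two distributions with different p(a0) p(a1): if R(a0) = R(a1) take
   (1,0,0) and (1/2,1/2,0), otherwise perturb the uniform distribution along the level line. *)

Lemma induced_order_total_preorder (E : env) (J : policy E -> realR) :
  total_preorder (induced_order J).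
Proof.
rewrite /induced_order; split; first by move=> p.
split; first by move=> p q r Jqp Jrq; exact: le_trans Jrq Jqp.
by move=> p q; case: (lerP (J q) (J p)) => [|/ltW]; [left | right].
Qed.

Lemma same_induced_order_eq (E : env) (J1 J2 : policy E -> realR) (p q : policy E) :
  same_rel (induced_order J1) (induced_order J2) -> J2 p = J2 q -> J1 p = J1 q.
Proof.
move=> J12 J2pq; apply/le_anti/andP; split.
- by apply/(J12 q p); rewrite /induced_order J2pq.
- by apply/(J12 p q); rewrite /induced_order J2pq.
Qed.

Lemma series_sum_eventually0 (u : nat -> realR) (N : nat) :
  (forall t, (N <= t)%N -> u t = 0) -> series_sum u = \sum_(0 <= t < N) u t.
Proof.
move=> uN0; apply: lim_near_cst; first exact: Rhausdorff.
exists N => // n /= Nn.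
rewrite (big_cat_nat (leq0n N) Nn) /= [X in _ + X]big1_seq ?addr0 // => t.
by rewrite /= mem_index_iota => /andP[Nt _]; exact: uN0.
Qed.

Lemma sum_policy_trans_const (E : env) (pol : policy E) (s : St E) (K : realR) :
  \sum_(a : Act E) \sum_(s' : St E) pol_fun pol s a * trans s a s' * K = K.
Proof.
under eq_bigr => a _ do rewrite -big_distrl -big_distrr /= (proj2 (trans_dist s a)) mulr1.
by rewrite -big_distrl /= (proj2 (proj2_sig pol s)) mul1r.
Qed.

Lemma pathsumS (E : env) (pol : policy E) n s h f :
  pathsum pol n.+1 s h f =
  \sum_(a : Act E) \sum_(s' : St E)
    pol_fun pol s a * trans s a s' * pathsum pol n s' ((s, a, s') :: h) f.
Proof. by []. Qed.

Lemma pathsum_const (E : env) (pol : policy E) n s h (K : realR) :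
  pathsum pol n s h (fun _ => K) = K.
Proof.
elim: n s h => [|n IHn] s h //=.
under eq_bigr do under eq_bigr do rewrite IHn.
exact: sum_policy_trans_const.
Qed.

Lemma prefix_expect_const (E : env) (pol : policy E) n (K : realR) :
  prefix_expect pol n (fun _ => K) = K.
Proof.
rewrite /prefix_expect; under eq_bigr do rewrite pathsum_const.
by rewrite -big_distrl /= (proj2 (init_dist E)) mul1r.
Qed.

Lemma on_step_reward_rcons (E : env) (O : ONMRspec E) t l (x : transition E) :
  size l = t -> on_step_reward O t (rcons l x) = let: (s, a, s') := x in on_R O s a s'.
Proof. by move=> <-; rewrite /on_step_reward -cats1 drop_size_cat. Qed.

Lemma card_ord_gt0 n : (0 < #|'I_n.+1|)%N.
Proof. by rewrite card_ord. Qed.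

Section Bandit.

Variables (A : finType) (A_nonempty : (0 < #|A|)%N).

Lemma is_dist_unit : is_dist (fun _ : 'I_1 => (1 : realR)).
Proof. by split=> //; rewrite big_ord1. Qed.

Definition bandit : env :=
  @Env 'I_1 A (fun _ _ _ => 1) (fun _ => 1) (card_ord_gt0 0) A_nonempty
    (fun _ _ => is_dist_unit) is_dist_unit.

Definition bandit_policy (p : A -> realR) (p_dist : is_dist p) : policy bandit :=
  exist (fun pol : St bandit -> A -> realR => forall s, is_dist (pol s)) (fun _ => p)
    (fun _ => p_dist).

Lemma bandit_pathsum_last (pol : policy bandit) n s h f (g : transition bandit -> realR) :
  (forall l x, size l = (size h + n)%N -> f (rcons l x) = g x) ->
  pathsum pol n.+1 s h f = \sum_(a : A) pol_fun pol ord0 a * g (ord0, a, ord0).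
Proof.
elim: n s h => [|n IHn] s h fg.
  rewrite /= (ord1 s); apply: eq_bigr => a _.
  by rewrite big_ord1 mulr1 rev_cons fg // size_rev addn0.
have tail_eq a s' : pathsum pol n.+1 s' ((s, a, s') :: h) f =
    \sum_(b : A) pol_fun pol ord0 b * g (ord0, b, ord0).
  by apply: IHn => l x; rewrite addSnnS; apply: fg.
rewrite pathsumS; under eq_bigr do under eq_bigr do rewrite tail_eq.
exact: sum_policy_trans_const.
Qed.

Lemma bandit_prefix_expect_last (pol : policy bandit) t f (g : transition bandit -> realR) :
  (forall l x, size l = t -> f (rcons l x) = g x) ->
  prefix_expect pol t.+1 f = \sum_(a : A) pol_fun pol ord0 a * g (ord0, a, ord0).
Proof.
move=> fg; rewrite /prefix_expect big_ord1 mul1r.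
by apply: bandit_pathsum_last => l x; rewrite add0n; apply: fg.
Qed.

Lemma bandit_ONMR_J_eq (O : ONMRspec bandit) (p q : policy bandit) :
  \sum_(a : A) pol_fun p ord0 a * on_R O ord0 a ord0 =
  \sum_(a : A) pol_fun q ord0 a * on_R O ord0 a ord0 ->
  ONMR_J O p = ONMR_J O q.
Proof.
move=> Rpq; rewrite /ONMR_J; congr (on_f O (series_sum _)); apply: funext => t.
by rewrite !(bandit_prefix_expect_last _ (@on_step_reward_rcons _ O t)) /= Rpq.
Qed.

Lemma bandit_prefix_expect2 (pol : policy bandit) f :
  prefix_expect pol 2 f = \sum_(a : A) \sum_(b : A)
    pol_fun pol ord0 a * pol_fun pol ord0 b * f [:: (ord0, a, ord0); (ord0, b, ord0)].
Proof.
rewrite /prefix_expect /= big_ord1 mul1r; apply: eq_bigr => a _.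
rewrite big_ord1 mulr1 big_distrr; apply: eq_bigr => b _.
by rewrite big_ord1 !mulr1; exact: mulrA.
Qed.

Variables a0 a1 : A.

(* Machine states: [None] before the first step, [Some true] once the first action
   was [a0], and [Some false] otherwise and from the second step on. *)
Definition then_rm_dU (u : option bool) (s : 'I_1) (a : A) (s' : 'I_1) : option bool :=
  if u is None then Some (a == a0) else Some false.

Definition then_rm_dR (u u' : option bool) (s : 'I_1) (a : A) (s' : 'I_1) : realR :=
  ((u == Some true) && (a == a1))%:R.

Lemma half_ge0 : 0 <= 1 / 2 :> realR. Proof. lra. Qed.
Lemma half_lt1 : 1 / 2 < 1 :> realR. Proof. lra. Qed.

Definition then_rm : RMspec bandit :=
  @RMSpec bandit (option bool) None then_rm_dU then_rm_dR (1 / 2) half_ge0 half_lt1.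

Lemma then_rm_run_sink l : rm_run (Some false : rmU then_rm) l = Some false.
Proof. by elim: l => [|[[s a] s'] l IHl]. Qed.

Lemma then_rm_step_reward_eq0 t h : t != 1%N -> rm_step_reward then_rm t h = 0.
Proof.
case: t => [|[|t]] // _; first by case: h => [|[[s a] s'] l].
case: h => [|[[s a] s'] [|[[r b] r'] l]] //; rewrite /rm_step_reward /= then_rm_run_sink.
by case: (drop t l) => [|[[q c] q'] l'].
Qed.

Lemma then_rm_expect_step1 (pol : policy bandit) :
  prefix_expect pol 2 (rm_step_reward then_rm 1) = pol_fun pol ord0 a0 * pol_fun pol ord0 a1.
Proof.
have reward a b : rm_step_reward then_rm 1 [:: (ord0, a, ord0); (ord0, b, ord0)] =
    ((a == a0) && (b == a1))%:R.
  by rewrite /rm_step_reward /=; case: (a == a0).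
rewrite bandit_prefix_expect2 (bigD1 a0) //= [\sum_(i | i != a0) _]big1 ?addr0;
  last by move=> a /negPf a_a0; rewrite big1 // => b _; rewrite reward a_a0 mulr0.
rewrite (bigD1 a1) //= [\sum_(i | i != a1) _]big1 ?addr0;
  last by move=> b /negPf b_a1; rewrite reward eqxx b_a1 mulr0.
by rewrite reward !eqxx mulr1.
Qed.

Lemma RM_J_then_rm (pol : policy bandit) :
  RM_J then_rm pol = 1 / 2 * (pol_fun pol ord0 a0 * pol_fun pol ord0 a1).
Proof.
have expect0 t : t != 1%N -> prefix_expect pol t.+1 (rm_step_reward then_rm t) = 0.
  move=> t1; rewrite (_ : rm_step_reward _ _ = fun=> 0) ?prefix_expect_const //.
  by apply: funext => h; apply: then_rm_step_reward_eq0.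
rewrite /RM_J (series_sum_eventually0 (N := 2)) => [|[|[|t]] //= _].
  by rewrite !big_nat_recl //= big_geq // expect0 // then_rm_expect_step1; ring.
by rewrite expect0 // mulr0.
Qed.

End Bandit.

Definition dist3 (x y z : realR) (i : 'I_3) : realR := nth 0 [:: x; y; z] i.

Lemma sum_ord3 (F : 'I_3 -> realR) : \sum_(i < 3) F i = F 0 + F 1 + F 2.
Proof.
by rewrite !big_ord_recr big_ord0 /= add0r; congr (_ + _ + _); congr F; apply/val_inj.
Qed.

Lemma dist3_is_dist x y z :
  0 <= x -> 0 <= y -> 0 <= z -> x + y + z = 1 -> is_dist (dist3 x y z).
Proof. by move=> x0 y0 z0 xyz; split=> [[[|[|[|i]]] ?]|]; rewrite ?sum_ord3. Qed.

Lemma exists_dist3_same_mean_distinct_mul (c : 'I_3 -> realR) :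
  exists p q : 'I_3 -> realR, [/\ is_dist p, is_dist q,
    \sum_i p i * c i = \sum_i q i * c i & p 0 * p 1 != q 0 * q 1].
Proof.
have [c01 | c01] := eqVneq (c 0) (c 1).
  exists (dist3 1 0 0), (dist3 (1 / 2) (1 / 2) 0); split.
  - by apply: dist3_is_dist; lra.
  - by apply: dist3_is_dist; lra.
  - by rewrite !sum_ord3 /dist3 /= -c01; lra.
  - by apply/negP; rewrite /dist3 /= => /eqP; lra.
(* Move the uniform distribution by +-d/(3N), d := (c1 - c2, c2 - c0, c0 - c1), N >= |d_i|:
   d is orthogonal to (1, 1, 1) and to c, so mass and mean are kept, while the quadratic terms
   cancel in p0 p1 - q0 q1, leaving a nonzero multiple of d0 + d1 = c1 - c0. *)
pose N := `|c 1 - c 2| + `|c 2 - c 0| + `|c 0 - c 1|.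
have N_gt0 : 0 < N.
  have : 0 < `|c 0 - c 1| by rewrite normr_gt0 subr_eq0.
  by move: (normr_ge0 (c 1 - c 2)) (normr_ge0 (c 2 - c 0)); rewrite /N; lra.
have [k k_gt0 k3N] : exists2 k : realR, 0 < k & k * (3 * N) = 1.
  have N3_gt0 : 0 < 3 * N by rewrite mulr_gt0.
  by exists (3 * N)^-1; rewrite ?invr_gt0 // mulVf // gt_eqF.
have /andP[l0 u0] : - `|c 1 - c 2| <= c 1 - c 2 <= `|c 1 - c 2| by rewrite -ler_norml.
have /andP[l1 u1] : - `|c 2 - c 0| <= c 2 - c 0 <= `|c 2 - c 0| by rewrite -ler_norml.
have /andP[l2 u2] : - `|c 0 - c 1| <= c 0 - c 1 <= `|c 0 - c 1| by rewrite -ler_norml.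
exists (dist3 (k * (N + (c 1 - c 2))) (k * (N + (c 2 - c 0))) (k * (N + (c 0 - c 1)))),
       (dist3 (k * (N - (c 1 - c 2))) (k * (N - (c 2 - c 0))) (k * (N - (c 0 - c 1)))).
split.
- apply: dist3_is_dist; try (apply: mulr_ge0; rewrite ?ltW //; rewrite /N; lra).
  by rewrite -[RHS]k3N; ring.
- apply: dist3_is_dist; try (apply: mulr_ge0; rewrite ?ltW //; rewrite /N; lra).
  by rewrite -[RHS]k3N; ring.
- by rewrite !sum_ord3 /dist3 /=; ring.
- rewrite /dist3 /= -subr_eq0 (_ : _ - _ = 2 * (k * k * N) * (c 1 - c 0)); last by ring.
  have c10 : c 1 - c 0 != 0 by rewrite subr_eq0 eq_sym.
  by rewrite !mulf_neq0 // ?pnatr_eq0 // gt_eqF.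
Qed.

Theorem mainTheorem20 :
  exists (E : env) (r : policy E -> policy E -> Prop),
    total_preorder r /\ Ord_RM r /\ ~ Ord_ONMR r.
Proof.
pose M := then_rm (card_ord_gt0 2) 0 1.
exists (bandit (card_ord_gt0 2)), (induced_order (RM_J M)).
split; [exact: induced_order_total_preorder | split; first by exists M].
case=> O same_MO.
have [p [q [p_dist q_dist mean_pq /negP mul_pq]]] :=
  exists_dist3_same_mean_distinct_mul (fun a => on_R O ord0 a ord0).
have := same_induced_order_eq same_MO
  (bandit_ONMR_J_eq (p := bandit_policy _ p_dist) (q := bandit_policy _ q_dist) mean_pq).
by rewrite !RM_J_then_rm /= => J_pq; apply/mul_pq/eqP; lra.
Qed.
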